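(* Let $2\le d_1\le d_2\le d_3\le d_4$ and let $\rho$ be any (normalized) mixed state on $H_1\otimes H_2\otimes H_3\otimes H_4$ with $\dim H_i=d_i$. Then for every integer $s$ with $2\le s\le d_1$, $$C^2(\rho)\ \ge\ \frac{1}{\binom{d_1-2}{s-2}\binom{d_2-2}{s-2}\binom{d_3-1}{s-1}\binom{d_4-1}{s-1}}\sum_{\rho_{s\otimes s\otimes s\otimes s}}C^2(\rho_{s\otimes s\otimes s\otimes s}),$$ where the sum runs over all possible $s\otimes s\otimes s\otimes s$ substates $\rho_{s\otimes s\otimes s\otimes s}$ of $\rho$.
   Context: Each $H_i\cong\mathbb{C}^{d_i}$ has a fixed computational basis. $C$ denotes the four-partite concurrence: for a (not necessarily normalized) vector $|\varphi\rangle$ with $\sigma=|\varphi\rangle\langle\varphi|$, $C(|\varphi\rangle)=2^{-1}\sqrt{14(\mathrm{tr}\,\sigma)^2-\sum_\alpha\mathrm{tr}(\sigma_\alpha^2)}$, $\alpha$ running over the 14 nonempty proper subsets of $\{1,2,3,4\}$ and $\sigma_\alpha=\mathrm{tr}_{\bar\alpha}\sigma$; for a (possibly unnormalized) positive semidefinite $\sigma$, $C(\sigma)=\min\sum_iC(|\psi_i\rangle)$ over all decompositions $\sigma=\sum_i|\psi_i\rangle\langle\psi_i|$ into unnormalized vectors. Substates: given subsets $S_i\subseteq\{1,\dots,d_i\}$ with $|S_i|=s$ and projectors $G_i=\sum_{x\in S_i}|x\rangle\langle x|$, the $s\otimes s\otimes s\otimes s$ substate of $\rho$ is the unnormalized operator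 $(G_1\otimes G_2\otimes G_3\otimes G_4)\rho(G_1\otimes G_2\otimes G_3\otimes G_4)$ on $\otimes_i\mathrm{span}\{|x\rangle:x\in S_i\}$. $\binom{n}{k}=n!/(k!(n-k)!)$. *)

From HB Require Import structures.
From mathcomp Require Import all_boot all_order all_algebra.
From mathcomp Require Import complex.
From mathcomp Require Import classical_sets reals.

Set Implicit Arguments.
Unset Strict Implicit.
Unset Printing Implicit Defensive.

Import Order.TTheory GRing.Theory Num.Theory.
Local Open Scope ring_scope.

(* A 4-partite system with local computational bases indexed by the finite
   types I1, I2, I3, I4 has basis indexed by ((I1 * I2) * I3) * I4.
   Vectors are functions T -> R[i], operators are kernels T -> T -> R[i]
   (matrix entries <x|sigma|y> = sigma x y). *)

Section Quantum.
Variable R : realType.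
Variables I1 I2 I3 I4 : finType.

Definition idx := (((I1 * I2) * I3) * I4)%type.

(* subsystems are numbered 0,1,2,3 (standing for 1,2,3,4) *)
Definition pickc {U : Type} (b : bool) (u v : U) : U := if b then u else v.

Definition mix (a : {set 'I_4}) (x y : idx) : idx :=
  (((pickc ((inord 0 : 'I_4) \in a) x.1.1.1 y.1.1.1,
     pickc ((inord 1 : 'I_4) \in a) x.1.1.2 y.1.1.2),
     pickc ((inord 2 : 'I_4) \in a) x.1.2 y.1.2),
     pickc ((inord 3 : 'I_4) \in a) x.2 y.2).

Definition optrace (sigma : idx -> idx -> R[i]) : R[i] := \sum_(x : idx) sigma x x.

(* tr(sigma_a ^2) where sigma_a = tr_{complement of a} sigma.
   Writing x = (a-part u, rest v), y = (a-part u', rest v'):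
   sigma_a(u,u') = sum_v sigma((u,v),(u',v)), hence
   tr(sigma_a^2) = sum_{u,u',v,v'} sigma((u,v),(u',v)) sigma((u',v'),(u,v'))
                 = sum_{x,y} sigma(x, mix a y x) sigma(y, mix a x y). *)
Definition trRed2 (a : {set 'I_4}) (sigma : idx -> idx -> R[i]) : R[i] :=
  \sum_(x : idx) \sum_(y : idx) sigma x (mix a y x) * sigma y (mix a x y).

Definition proj (phi : idx -> R[i]) : idx -> idx -> R[i] :=
  fun x y => phi x * conjc (phi y).

(* The radicand is real; we take its real part. *)
Definition conc_vec (phi : idx -> R[i]) : R :=
  2^-1 * Num.sqrt (complex.Re
    (14%:R * (optrace (proj phi)) ^+ 2
     - \sum_(a : {set 'I_4} | (a != finset.set0) && (a != finset.setT)) trRed2 a (proj phi))).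

Definition is_decomp (sigma : idx -> idx -> R[i]) (n : nat)
    (psi : 'I_n -> idx -> R[i]) : Prop :=
  forall x y, sigma x y = \sum_(k < n) psi k x * conjc (psi k y).

(* concurrence of a positive semidefinite operator: the minimum (= infimum,
   which is attained) of sum_i C(psi_i) over all decompositions *)
Definition conc_mixed (sigma : idx -> idx -> R[i]) : R :=
  inf [set c : R | exists (n : nat) (psi : 'I_n -> idx -> R[i]),
                     is_decomp sigma psi /\ c = \sum_(k < n) conc_vec (psi k)]%classic.

(* positive semidefinite (hence Hermitian, over C) operator *)
Definition psd (sigma : idx -> idx -> R[i]) : Prop :=
  forall v : idx -> R[i],
    0 <= \sum_(x : idx) \sum_(y : idx) conjc (v x) * sigma x y * v y.

Definition density (rho : idx -> idx -> R[i]) : Prop :=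
  psd rho /\ optrace rho = 1.

End Quantum.

(* The substate of rho on the subsets S1,...,S4 of the local bases:
   (G1 x G2 x G3 x G4) rho (G1 x G2 x G3 x G4) as an operator on
   the tensor product of span{|x> : x in S_i}, i.e. indexed by the
   subtypes {x | x \in S_i}. *)
Definition substate (R : realType) (d1 d2 d3 d4 : nat)
  (rho : idx 'I_d1 'I_d2 'I_d3 'I_d4 -> idx 'I_d1 'I_d2 'I_d3 'I_d4 -> R[i])
  (S1 : {set 'I_d1}) (S2 : {set 'I_d2}) (S3 : {set 'I_d3}) (S4 : {set 'I_d4})
  : idx {x | x \in S1} {x | x \in S2} {x | x \in S3} {x | x \in S4} ->
    idx {x | x \in S1} {x | x \in S2} {x | x \in S3} {x | x \in S4} -> R[i] :=
  fun u v =>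
    rho (((val u.1.1.1, val u.1.1.2), val u.1.2), val u.2)
        (((val v.1.1.1, val v.1.1.2), val v.1.2), val v.2).
Arguments substate {R d1 d2 d3 d4} rho S1 S2 S3 S4 _ _.

From HB Require Import structures.
From mathcomp Require Import all_boot all_order all_algebra.
From mathcomp Require Import complex.
From mathcomp Require Import classical_sets reals.
From mathcomp Require Import ring lra zify.
Import Order.TTheory GRing.Theory Num.Theory.
Local Open Scope ring_scope.
Local Open Scope complex_scope.
Set Implicit Arguments.
Unset Strict Implicit.
Unset Printing Implicit Defensive.

(* 1. For an unnormalized vector psi, C(psi)^2 = 1/8 * sum_alpha sum_{x,y}
      |psi(x) psi(y) - psi(y_alpha x) psi(x_alpha y)|^2, where x_alpha y takes
      the alpha-coordinates from x and the others from y.  Such a "minor"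
      vanishes unless x and y differ in at least two coordinates.
   2. Restricting psi to a box S1 x S2 x S3 x S4 keeps exactly the minors
      whose two indices lie in the box.  A pair differing in at least two
      coordinates lies in at most D = C(d1-2,s-2) C(d2-2,s-2) C(d3-1,s-1)
      C(d4-1,s-1) boxes of side s (here d1 <= d2 <= d3 <= d4 is used), so
      sum_boxes C(psi_box)^2 <= D C(psi)^2.
   3. Every positive semidefinite operator has a finite decomposition
      (Schur-complement induction), and decompositions of rho restrict to
      decompositions of all substates.  For a near-optimal decomposition
      rho = sum_k |psi_k><psi_k|, Minkowski's inequality in l2(boxes) gives
      || (C(rho_box))_box ||_2 <= sum_k || (C(psi_k,box))_box ||_2
      <= sqrt D sum_k C(psi_k), which is close to sqrt D C(rho). *)

Lemma card_proper_subsets4 :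
  #|[pred a : {set 'I_4} | (a != finset.set0) && (a != finset.setT)]| = 14%N.
Proof.
have setT_neq0 : ([set: 'I_4] == finset.set0) = false.
  apply/negP => /eqP h; have : (ord0 : 'I_4) \in [set: 'I_4] by rewrite inE.
  by rewrite h inE.
have := cardD1 finset.set0 [pred a : {set 'I_4} | true].
have := cardD1 finset.setT [predD1 [pred a : {set 'I_4} | true] & finset.set0].
rewrite !inE /= setT_neq0 /= => h1 h2.
have -> : #|[pred a : {set 'I_4} | (a != finset.set0) && (a != finset.setT)]|
        = #|[predD1 [predD1 [pred a : {set 'I_4} | true] & finset.set0] & finset.setT]|.
  by apply: eq_card => a; rewrite !inE andbC andbT.
have h16 : #|[pred a : {set 'I_4} | true]| = 16%N.
  have : #|{set 'I_4}| = 16%N.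
    by rewrite -cardsT -powersetT card_powerset cardsT card_ord.
  by move=> <-; apply: eq_card.
by move: h2; rewrite h16 h1 => -[].
Qed.

Section PureConcurrence.
Variable R : realType.
Variables I1 I2 I3 I4 : finType.
Local Notation C := R[i].
Local Notation T := (idx I1 I2 I3 I4).

Lemma mixK (a : {set 'I_4}) (x y : T) : mix a (mix a x y) (mix a y x) = x.
Proof.
case: x => [[[x1 x2] x3] x4]; case: y => [[[y1 y2] y3] y4].
by rewrite /mix /pickc /=; do 4 case: (_ \in a).
Qed.

(* (x, y) |-> (y_a x, x_a y) is an involution of T * T, so double sums are
   invariant under it. *)
Lemma sum_mix_swap a (F : T -> T -> C) :
  \sum_x \sum_y F (mix a y x) (mix a x y) = \sum_x \sum_y F x y.
Proof.
rewrite !pair_bigA /=.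
pose f (p : T * T) := (mix a p.2 p.1, mix a p.1 p.2).
have f_inv : involutive f by move=> [x y]; rewrite /f /= !mixK.
by rewrite [RHS](reindex_inj (inv_inj f_inv)).
Qed.

Definition minor a (psi : T -> C) x y :=
  psi x * psi y - psi (mix a y x) * psi (mix a x y).

Lemma sum_minor_sq a psi :
  \sum_x \sum_y minor a psi x y * conjc (minor a psi x y)
  = 2%:R * optrace (proj psi) ^+ 2 - 2%:R * trRed2 a (proj psi).
Proof.
pose P x y := psi x * psi y * conjc (psi x * psi y).
pose Q x y := psi x * psi y * conjc (psi (mix a y x) * psi (mix a x y)).
have expand x y : minor a psi x y * conjc (minor a psi x y) =
   (P x y - Q x y) - (Q (mix a y x) (mix a x y) - P (mix a y x) (mix a x y)).
  by rewrite /minor /P /Q !mixK !rmorphB /=; ring.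
under eq_bigr do under eq_bigr do rewrite expand.
under eq_bigr do rewrite !sumrB.
rewrite !sumrB (sum_mix_swap a Q) (sum_mix_swap a P).
have -> : \sum_x \sum_y P x y = optrace (proj psi) ^+ 2.
  rewrite expr2 /optrace /proj big_distrlr; apply: eq_bigr => x _.
  by apply: eq_bigr => y _; rewrite /P rmorphM /=; ring.
have -> : \sum_x \sum_y Q x y = trRed2 a (proj psi).
  rewrite /trRed2 /proj; apply: eq_bigr => x _; apply: eq_bigr => y _.
  by rewrite /Q rmorphM /=; ring.
ring.
Qed.

Definition normsq (z : C) : R := complex.Re (z * conjc z).

Lemma normsqE z : z * conjc z = (normsq z)%:C.
Proof. by case: z => a b; rewrite /normsq /=; congr (_ +i* _); ring. Qed.

Lemma normsq_ge0 z : 0 <= normsq z.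
Proof.
case: z => a b; rewrite /normsq /=.
have -> : a * a - b * - b = a ^+ 2 + b ^+ 2 by ring.
by rewrite addr_ge0 // sqr_ge0.
Qed.

Lemma normsq0 : normsq 0 = 0.
Proof. by rewrite /normsq mul0r. Qed.

Definition minor_mass psi :=
  \sum_(a : {set 'I_4} | (a != finset.set0) && (a != finset.setT))
    \sum_x \sum_y normsq (minor a psi x y).

Lemma minor_mass_ge0 psi : 0 <= minor_mass psi.
Proof.
by do 3 (apply: sumr_ge0 => ? _); apply: normsq_ge0.
Qed.

Lemma conc_vec_sq psi : conc_vec psi ^+ 2 = minor_mass psi / 8%:R.
Proof.
have mass_sum : \sum_(a : {set 'I_4} | (a != finset.set0) && (a != finset.setT))
   (2%:R * optrace (proj psi) ^+ 2 - 2%:R * trRed2 a (proj psi))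
   = (minor_mass psi)%:C.
  rewrite /minor_mass raddf_sum; apply: eq_bigr => a _.
  rewrite -sum_minor_sq raddf_sum; apply: eq_bigr => x _.
  by rewrite raddf_sum; apply: eq_bigr => y _; rewrite normsqE.
rewrite sumrB sumr_const card_proper_subsets4 -mulr_sumr in mass_sum.
have radicand : 14%:R * optrace (proj psi) ^+ 2
     - \sum_(a : {set 'I_4} | (a != finset.set0) && (a != finset.setT)) trRed2 a (proj psi)
     = (minor_mass psi / 2%:R)%:C.
  by rewrite rmorphM fmorphV /= rmorph_nat -mass_sum; field.
rewrite /conc_vec radicand /= exprMn sqr_sqrtr; last first.
  by rewrite divr_ge0 ?minor_mass_ge0 ?ler0n.
by field.
Qed.

Definition ndiff (x y : T) : nat :=
  ((x.1.1.1 != y.1.1.1) + (x.1.1.2 != y.1.1.2) + (x.1.2 != y.1.2)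
   + (x.2 != y.2))%N.

Lemma minor_ndiff_lt2 a (psi : T -> C) x y : (ndiff x y < 2)%N ->
  minor a psi x y = 0.
Proof.
case: x => [[[x1 x2] x3] x4]; case: y => [[[y1 y2] y3] y4].
rewrite /ndiff /minor /mix /pickc /=.
case: (eqVneq x1 y1) => [<-|n1]; case: (eqVneq x2 y2) => [<-|n2];
case: (eqVneq x3 y3) => [<-|n3]; case: (eqVneq x4 y4) => [<-|n4];
rewrite ?eqxx ?n1 ?n2 ?n3 ?n4 //= => _;
by do 4 case: (_ \in a); rewrite ?subrr // mulrC subrr.
Qed.

End PureConcurrence.

Lemma sum_idx (R : realType) (J1 J2 J3 J4 : finType) (F : idx J1 J2 J3 J4 -> R) :
  \sum_p F p = \sum_a \sum_b \sum_c \sum_d F (((a, b), c), d).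
Proof. by rewrite !pair_bigA; apply: eq_bigr => -[[[a b] c] d]. Qed.

Lemma sum_subtype (R : realType) (J : finType) (S : {set J}) (f : J -> R) :
  \sum_(u : {x | x \in S}) f (val u) = \sum_x (x \in S)%:R * f x.
Proof.
rewrite -big_sub big_mkcond; apply: eq_bigr => x _.
by case: (x \in S); rewrite ?mul1r ?mul0r.
Qed.

Section Restriction.
Variable R : realType.
Variables I1 I2 I3 I4 : finType.
Local Notation C := R[i].
Local Notation T := (idx I1 I2 I3 I4).
Variables (S1 : {set I1}) (S2 : {set I2}) (S3 : {set I3}) (S4 : {set I4}).
Local Notation U :=
  (idx {x | x \in S1} {x | x \in S2} {x | x \in S3} {x | x \in S4}).

Definition embed (u : U) : T := (((val u.1.1.1, val u.1.1.2), val u.1.2), val u.2).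
Definition restrict_vec (psi : T -> C) : U -> C := fun u => psi (embed u).
Definition in_box (x : T) : bool :=
  [&& x.1.1.1 \in S1, x.1.1.2 \in S2, x.1.2 \in S3 & x.2 \in S4].

Lemma embed_mix a u v : embed (mix a u v) = mix a (embed u) (embed v).
Proof.
case: u => [[[x1 x2] x3] x4]; case: v => [[[y1 y2] y3] y4].
by rewrite /embed /mix /pickc /=; do 4 case: (_ \in a).
Qed.

Lemma minor_restrict a psi u v :
  minor a (restrict_vec psi) u v = minor a psi (embed u) (embed v).
Proof. by rewrite /minor /restrict_vec !embed_mix. Qed.

Lemma sum_embed (F : T -> R) : \sum_u F (embed u) = \sum_x (in_box x)%:R * F x.
Proof.
rewrite sum_idx [RHS]sum_idx /embed /=.
rewrite (sum_subtype S1 (fun a => \sum_(u2 : {x | x \in S2})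
   \sum_(u3 : {x | x \in S3}) \sum_(u4 : {x | x \in S4})
   F (((a, val u2), val u3), val u4))).
apply: eq_bigr => a _.
rewrite (sum_subtype S2 (fun b => \sum_(u3 : {x | x \in S3})
   \sum_(u4 : {x | x \in S4}) F (((a, b), val u3), val u4))).
rewrite mulr_sumr; apply: eq_bigr => b _.
rewrite (sum_subtype S3 (fun c => \sum_(u4 : {x | x \in S4}) F (((a, b), c), val u4))).
rewrite !mulr_sumr; apply: eq_bigr => c _.
rewrite (sum_subtype S4 (fun d => F (((a, b), c), d))).
rewrite !mulr_sumr; apply: eq_bigr => d _.
by rewrite /in_box /=; case: (a \in S1); case: (b \in S2); case: (c \in S3);
  case: (d \in S4); rewrite /= ?mul1r ?mul0r.
Qed.

Lemma minor_mass_restrict psi : minor_mass (restrict_vec psi) =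
  \sum_(a : {set 'I_4} | (a != finset.set0) && (a != finset.setT))
    \sum_x \sum_y ((in_box x)%:R * (in_box y)%:R * normsq (minor a psi x y)).
Proof.
rewrite /minor_mass; apply: eq_bigr => a _.
under eq_bigr => u _ do under eq_bigr => v _ do rewrite minor_restrict.
under eq_bigr => u _ do rewrite (sum_embed (fun y => normsq (minor a psi (embed u) y))).
rewrite (sum_embed (fun x => \sum_y (in_box y)%:R * normsq (minor a psi x y))).
apply: eq_bigr => x _; rewrite mulr_sumr; apply: eq_bigr => y _.
by rewrite mulrA.
Qed.

End Restriction.
Arguments restrict_vec {R I1 I2 I3 I4} S1 S2 S3 S4 psi _.

Section BinomialBounds.
Variable s : nat.
Hypothesis s_ge2 : (2 <= s)%N.

(* Numbers of s-subsets of a d-set containing two given distinct points,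
   respectively one given point. *)
Definition cA d := 'C(d - 2, s - 2).
Definition cB d := 'C(d - 1, s - 1).

Definition pair_bound d (same : bool) := if same then cB d else cA d.

Lemma cAB_rel d : (s <= d)%N -> ((s - 1) * cB d = (d - 1) * cA d)%N.
Proof.
move=> hd; rewrite /cA /cB.
have := mul_bin_diag (d - 1) (s - 2).
have -> : (d - 1).-1 = (d - 2)%N by lia.
by have -> : (s - 2).+1 = (s - 1)%N by lia.
Qed.

Lemma cA_le_cB d : (s <= d)%N -> (cA d <= cB d)%N.
Proof.
move=> hd; have s1 : (0 < s - 1)%N by lia.
by rewrite -(leq_pmul2l s1) cAB_rel //; apply: leq_mul => //; lia.
Qed.

(* Trading a "two points" factor for a larger dimension pays off:
   cB d / cA d = (d - 1) / (s - 1) grows with d. *)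
Lemma cB_cA_swap d d' : (s <= d)%N -> (d <= d')%N ->
  (cB d * cA d' <= cA d * cB d')%N.
Proof.
move=> hd hd'; have s1 : (0 < s - 1)%N by lia.
rewrite -(leq_pmul2l s1).
have r1 := congr1 (muln^~ (cA d')) (cAB_rel hd).
have r2 := congr1 (muln (cA d)) (@cAB_rel d' ltac:(lia)).
have := leq_mul (leq_sub2r 1 hd') (leqnn (cA d * cA d')).
simpl in r1, r2; lia.
Qed.

Variables d1 d2 d3 d4 : nat.
Hypotheses (h1 : (s <= d1)%N) (h12 : (d1 <= d2)%N) (h23 : (d2 <= d3)%N)
  (h34 : (d3 <= d4)%N).

(* When at least two coordinates differ, the product of the pair bounds is
   maximal when the two differing coordinates are the two smallest ones. *)
Lemma pair_bound_prod_le e1 e2 e3 e4 : (2 <= ~~e1 + ~~e2 + ~~e3 + ~~e4)%N ->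
  (pair_bound d1 e1 * pair_bound d2 e2 * pair_bound d3 e3 * pair_bound d4 e4
   <= cA d1 * cA d2 * cB d3 * cB d4)%N.
Proof.
have ab3 := @cA_le_cB d3 ltac:(lia); have ab4 := @cA_le_cB d4 ltac:(lia).
have sw13 := @cB_cA_swap d1 d3 ltac:(lia) ltac:(lia).
have sw14 := @cB_cA_swap d1 d4 ltac:(lia) ltac:(lia).
have sw23 := @cB_cA_swap d2 d3 ltac:(lia) ltac:(lia).
have sw24 := @cB_cA_swap d2 d4 ltac:(lia) ltac:(lia).
case: e1; case: e2; case: e3; case: e4 => //= _; rewrite /pair_bound.
- by have := leq_mul sw13 sw24; lia.
- by have := leq_mul sw14 (leqnn (cA d2 * cB d3)); lia.
- by have := leq_mul sw13 (leqnn (cA d2 * cB d4)); lia.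
- by have := leq_mul (leq_mul sw13 ab4) (leqnn (cA d2)); lia.
- by have := leq_mul sw24 (leqnn (cA d1 * cB d3)); lia.
- by have := leq_mul sw23 (leqnn (cA d1 * cB d4)); lia.
- by have := leq_mul (leq_mul sw23 ab4) (leqnn (cA d1)); lia.
- by have := leq_mul ab4 (leqnn (cA d1 * cA d2 * cB d3)); lia.
- by have := leq_mul ab3 (leqnn (cA d1 * cA d2 * cB d4)); lia.
- by have := leq_mul (leq_mul ab3 ab4) (leqnn (cA d1 * cA d2)); lia.
Qed.

End BinomialBounds.

(* The s-subsets containing a given set A0 are in bijection, via S |-> S \ A0,
   with the (s - #|A0|)-subsets of the complement of A0. *)
Lemma card_sets_containing (J : finType) (s : nat) (A0 : {set J}) :
  (#|[set S : {set J} | (#|S| == s) && (A0 \subset S)]|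
    <= 'C(#|J| - #|A0|, s - #|A0|))%N.
Proof.
set D := [set S : {set J} | (#|S| == s) && (A0 \subset S)].
have inj : {in D &, injective (fun S => S :\: A0)}.
  move=> S1 S2; rewrite !inE => /andP[_ h1] /andP[_ h2] e.
  apply/setP => x; case xA: (x \in A0).
    by rewrite (fintype.subsetP h1 _ xA) (fintype.subsetP h2 _ xA).
  by have := congr1 (fun X : {set J} => x \in X) e; rewrite /= !inE xA.
rewrite -(card_in_imset inj).
have <- : #|~: A0| = (#|J| - #|A0|)%N by rewrite cardsCs finset.setCK.
rewrite -cards_draws; apply: subset_leq_card.
apply/fintype.subsetP => _ /imsetP[S SD ->]; move: SD; rewrite !inE => /andP[/eqP hs h].
rewrite cardsDS // hs eqxx andbT.
by apply/fintype.subsetP => x; rewrite !inE => /andP[].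
Qed.

Lemma count_sets_containing (R : realType) d s (a b : 'I_d) :
  \sum_(S : {set 'I_d} | #|S| == s) ((a \in S) && (b \in S))%:R
   <= (pair_bound s d (a == b))%:R :> R.
Proof.
have -> : \sum_(S : {set 'I_d} | #|S| == s) ((a \in S) && (b \in S))%:R
    = \sum_(S : {set 'I_d} | (#|S| == s) && ((a \in S) && (b \in S))) (1 : R).
  by rewrite big_mkcondr; apply: eq_bigr => S _; case: (_ && _).
rewrite sumr_const ler_nat.
have -> : #|[pred S : {set 'I_d} | (#|S| == s) && ((a \in S) && (b \in S))]|
    = #|[set S : {set 'I_d} | (#|S| == s) && ([set a; b] \subset S)]|.
  by apply: eq_card => S; rewrite !inE finset.subUset !finset.sub1set.
apply: leq_trans (card_sets_containing _ _) _.
by rewrite card_ord cards2 /pair_bound /cA /cB; case: (a == b).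
Qed.

Lemma sum4_prod (R : realType) (K1 K2 K3 K4 : finType) (P1 : pred K1)
  (P2 : pred K2) (P3 : pred K3) (P4 : pred K4) (c1 : K1 -> R) (c2 : K2 -> R)
  (c3 : K3 -> R) (c4 : K4 -> R) :
  \sum_(k1 | P1 k1) \sum_(k2 | P2 k2) \sum_(k3 | P3 k3) \sum_(k4 | P4 k4)
     (c1 k1 * c2 k2 * c3 k3 * c4 k4)
  = (\sum_(k1 | P1 k1) c1 k1) * (\sum_(k2 | P2 k2) c2 k2)
    * (\sum_(k3 | P3 k3) c3 k3) * (\sum_(k4 | P4 k4) c4 k4).
Proof.
symmetry; rewrite !mulr_suml; apply: eq_bigr => k1 _.
rewrite [c1 k1 * _]mulr_sumr !mulr_suml; apply: eq_bigr => k2 _.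
rewrite [c1 k1 * c2 k2 * _]mulr_sumr !mulr_suml; apply: eq_bigr => k3 _.
by rewrite mulr_sumr.
Qed.

Definition boxes d1 d2 d3 d4 :=
  ((({set 'I_d1} * {set 'I_d2}) * {set 'I_d3}) * {set 'I_d4})%type.

Definition sized d1 d2 d3 d4 s (p : boxes d1 d2 d3 d4) : bool :=
  (((#|p.1.1.1| == s) && (#|p.1.1.2| == s)) && (#|p.1.2| == s)) && (#|p.2| == s).

Lemma sum_boxes (R : realType) d1 d2 d3 d4 s
    (F : {set 'I_d1} -> {set 'I_d2} -> {set 'I_d3} -> {set 'I_d4} -> R) :
  \sum_(S1 : {set 'I_d1} | #|S1| == s) \sum_(S2 : {set 'I_d2} | #|S2| == s)
  \sum_(S3 : {set 'I_d3} | #|S3| == s) \sum_(S4 : {set 'I_d4} | #|S4| == s)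
    F S1 S2 S3 S4
  = \sum_(p : boxes d1 d2 d3 d4 | sized s p) F p.1.1.1 p.1.1.2 p.1.2 p.2.
Proof. by rewrite !pair_big. Qed.

Definition restrict_box (R : realType) d1 d2 d3 d4 (p : boxes d1 d2 d3 d4)
    (psi : idx 'I_d1 'I_d2 'I_d3 'I_d4 -> R[i]) :=
  restrict_vec p.1.1.1 p.1.1.2 p.1.2 p.2 psi.
Arguments restrict_box {R d1 d2 d3 d4} p psi _.

Definition in_box_of d1 d2 d3 d4 (p : boxes d1 d2 d3 d4)
    (x : idx 'I_d1 'I_d2 'I_d3 'I_d4) : bool :=
  in_box p.1.1.1 p.1.1.2 p.1.2 p.2 x.

Section BoxCounting.
Variable R : realType.
Variables (s d1 d2 d3 d4 : nat).
Hypotheses (s_ge2 : (2 <= s)%N) (h1 : (s <= d1)%N) (h12 : (d1 <= d2)%N)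
  (h23 : (d2 <= d3)%N) (h34 : (d3 <= d4)%N).
Local Notation T := (idx 'I_d1 'I_d2 'I_d3 'I_d4).

Let D := (cA s d1 * cA s d2 * cB s d3 * cB s d4)%N.

Lemma count_boxes_containing (x y : T) : (2 <= ndiff x y)%N ->
  \sum_(p | sized s p) ((in_box_of p x)%:R * (in_box_of p y)%:R)
  <= D%:R :> R.
Proof.
move=> hxy.
have split_box S1 S2 S3 S4 :
    (in_box S1 S2 S3 S4 x)%:R * (in_box S1 S2 S3 S4 y)%:R
  = ((x.1.1.1 \in S1) && (y.1.1.1 \in S1))%:R
    * ((x.1.1.2 \in S2) && (y.1.1.2 \in S2))%:R
    * ((x.1.2 \in S3) && (y.1.2 \in S3))%:R * ((x.2 \in S4) && (y.2 \in S4))%:R :> R.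
  rewrite /in_box.
  case: (x.1.1.1 \in S1); case: (y.1.1.1 \in S1);
  case: (x.1.1.2 \in S2); case: (y.1.1.2 \in S2);
  case: (x.1.2 \in S3); case: (y.1.2 \in S3);
  by case: (x.2 \in S4); case: (y.2 \in S4); rewrite /= ?mul1r ?mul0r ?mulr0.
rewrite -(sum_boxes s (fun S1 S2 S3 S4 =>
  (in_box S1 S2 S3 S4 x)%:R * (in_box S1 S2 S3 S4 y)%:R)).
under eq_bigr do under eq_bigr do under eq_bigr do under eq_bigr do
  rewrite split_box.
rewrite sum4_prod.
apply: le_trans (_ : (pair_bound s d1 (x.1.1.1 == y.1.1.1))%:R
   * (pair_bound s d2 (x.1.1.2 == y.1.1.2))%:R
   * (pair_bound s d3 (x.1.2 == y.1.2))%:R * (pair_bound s d4 (x.2 == y.2))%:R <= _).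
  have count_ge0 k (P : {set 'I_k} -> bool) (f : {set 'I_k} -> bool) :
      0 <= \sum_(S | P S) (f S)%:R :> R.
    by apply: sumr_ge0 => S _; apply: ler0n.
  by rewrite !ler_pM ?mulr_ge0 ?count_ge0 ?count_sets_containing.
by rewrite -!natrM ler_nat; apply: pair_bound_prod_le.
Qed.

Lemma sum_minor_mass_restrict (psi : T -> R[i]) :
  \sum_(p | sized s p) minor_mass (restrict_box p psi) <= D%:R * minor_mass psi.
Proof.
under eq_bigr do rewrite /restrict_box minor_mass_restrict.
rewrite exchange_big /minor_mass mulr_sumr; apply: ler_sum => a _.
rewrite exchange_big mulr_sumr; apply: ler_sum => x _.
rewrite exchange_big mulr_sumr; apply: ler_sum => y _.
rewrite -mulr_suml.
case: (ltnP (ndiff x y) 2) => hxy.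
  by rewrite minor_ndiff_lt2 // normsq0 !mulr0.
by apply: ler_wpM2r; [exact: normsq_ge0 | exact: count_boxes_containing].
Qed.

Lemma sum_conc_restrict (psi : T -> R[i]) :
  \sum_(p | sized s p) conc_vec (restrict_box p psi) ^+ 2
  <= D%:R * conc_vec psi ^+ 2.
Proof.
rewrite conc_vec_sq; under eq_bigr do rewrite conc_vec_sq.
rewrite -mulr_suml mulrA ler_pM2r ?invr_gt0 ?ltr0n //.
exact: sum_minor_mass_restrict.
Qed.

End BoxCounting.

Section L2Norm.
Variable R : realType.
Variable I : finType.
Variable P : pred I.

(* Cauchy-Schwarz, from Lagrange's identity. *)
Lemma cauchy_schwarz (u v : I -> R) :
  (\sum_(i | P i) u i * v i) ^+ 2
  <= (\sum_(i | P i) u i ^+ 2) * (\sum_(i | P i) v i ^+ 2).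
Proof.
have lagrange : 0 <= \sum_(i | P i) \sum_(j | P j) (u i * v j - u j * v i) ^+ 2.
  by do 2 (apply: sumr_ge0 => ? _); apply: sqr_ge0.
have expand i j : (u i * v j - u j * v i) ^+ 2 =
   (u i ^+ 2 * v j ^+ 2 + v i ^+ 2 * u j ^+ 2) - (2%:R * (u i * v i)) * (u j * v j).
  by ring.
have lagrange_eq :
  \sum_(i | P i) \sum_(j | P j) (u i * v j - u j * v i) ^+ 2 =
  (\sum_(i | P i) u i ^+ 2) * (\sum_(i | P i) v i ^+ 2)
  + (\sum_(i | P i) v i ^+ 2) * (\sum_(i | P i) u i ^+ 2)
  - (\sum_(i | P i) 2%:R * (u i * v i)) * (\sum_(i | P i) u i * v i).
  under eq_bigr do under eq_bigr do rewrite expand.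
  under eq_bigr do rewrite sumrB big_split /=.
  by rewrite sumrB big_split /= !big_distrlr.
rewrite lagrange_eq -mulr_sumr in lagrange.
by rewrite expr2; lra.
Qed.

Definition l2norm (f : I -> R) := Num.sqrt (\sum_(i | P i) f i ^+ 2).

Lemma l2norm_ge0 f : 0 <= l2norm f.
Proof. exact: sqrtr_ge0. Qed.

Lemma l2norm_triangle (u v : I -> R) :
  l2norm (fun i => u i + v i) <= l2norm u + l2norm v.
Proof.
rewrite /l2norm.
set a := Num.sqrt (\sum_(i | P i) u i ^+ 2).
set b := Num.sqrt (\sum_(i | P i) v i ^+ 2).
have a0 : 0 <= a by apply: sqrtr_ge0.
have b0 : 0 <= b by apply: sqrtr_ge0.
have sq_ge0 (f : I -> R) : 0 <= \sum_(i | P i) f i ^+ 2.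
  by apply: sumr_ge0 => i _; apply: sqr_ge0.
have su : \sum_(i | P i) u i ^+ 2 = a ^+ 2 by rewrite sqr_sqrtr.
have sv : \sum_(i | P i) v i ^+ 2 = b ^+ 2 by rewrite sqr_sqrtr.
have cs : \sum_(i | P i) u i * v i <= a * b.
  have := cauchy_schwarz u v; rewrite su sv -exprMn => h.
  apply: le_trans (ler_norm _) _.
  rewrite -sqrtr_sqr -(ger0_norm (mulr_ge0 a0 b0)) -sqrtr_sqr ler_sqrt //.
  exact: sqr_ge0.
have expand : \sum_(i | P i) (u i + v i) ^+ 2 =
  \sum_(i | P i) u i ^+ 2 + 2%:R * \sum_(i | P i) u i * v i
  + \sum_(i | P i) v i ^+ 2.
  by rewrite mulr_sumr -!big_split /=; apply: eq_bigr => i _; ring.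
rewrite expand su sv -(ger0_norm (addr_ge0 a0 b0)) -sqrtr_sqr.
by rewrite ler_sqrt ?sqr_ge0 // sqrrD; lra.
Qed.

Lemma l2norm_sum n (f : 'I_n -> I -> R) :
  l2norm (fun i => \sum_(k < n) f k i) <= \sum_(k < n) l2norm (f k).
Proof.
elim: n f => [|n IH] f.
  rewrite big_ord0 /l2norm.
  under eq_bigr do rewrite big_ord0 expr0n /=.
  by rewrite big1_eq sqrtr0.
rewrite big_ord_recr /=.
have -> : l2norm (fun i => \sum_(k < n.+1) f k i)
   = l2norm (fun i => \sum_(k < n) f (widen_ord (leqnSn n) k) i + f ord_max i).
  by rewrite /l2norm; congr Num.sqrt; apply: eq_bigr => i _; rewrite big_ord_recr.
by apply: le_trans (l2norm_triangle _ _) _; rewrite lerD2r; apply: IH.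
Qed.

Lemma l2norm_mono (f g : I -> R) :
  (forall i, P i -> 0 <= f i <= g i) -> l2norm f <= l2norm g.
Proof.
move=> h; rewrite /l2norm ler_sqrt; last by apply: sumr_ge0 => i _; apply: sqr_ge0.
apply: ler_sum => i Pi; have /andP[f0 fg] := h i Pi.
by rewrite !expr2 ler_pM.
Qed.

Lemma l2norm_dominated n (X : I -> R) (c : 'I_n -> I -> R) (lam : 'I_n -> R)
    (D : R) :
  0 <= D ->
  (forall i, P i -> 0 <= X i <= \sum_(k < n) c k i) ->
  (forall k i, 0 <= c k i) ->
  (forall k, \sum_(i | P i) c k i ^+ 2 <= D * lam k ^+ 2) ->
  (forall k, 0 <= lam k) ->
  l2norm X <= Num.sqrt D * \sum_(k < n) lam k.
Proof.
move=> D0 hX hc hD hl.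
apply: le_trans (l2norm_mono hX) _.
apply: le_trans (l2norm_sum c) _.
rewrite mulr_sumr; apply: ler_sum => k _.
rewrite /l2norm -(ger0_norm (hl k)) -sqrtr_sqr -sqrtrM ?sqr_ge0 //.
by rewrite ler_sqrt ?mulr_ge0 ?sqr_ge0 // real_normK ?num_real.
Qed.

End L2Norm.

Section PsdDecomposition.
Variable R : realType.
Variable T : finType.
Local Notation C := R[i].

Definition qform (A : T -> T -> C) (v : T -> C) :=
  \sum_x \sum_y conjc (v x) * A x y * v y.

Definition psd_ker (A : T -> T -> C) := forall v, 0 <= qform A v.

Lemma sum_delta_l (f : T -> C) x0 : \sum_z (z == x0)%:R * f z = f x0.
Proof.
rewrite (bigD1 x0) //= eqxx mul1r big1 ?addr0 // => z /negbTE ->.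
by rewrite mul0r.
Qed.

Lemma sum_delta_r (f : T -> C) x0 : \sum_z f z * (z == x0)%:R = f x0.
Proof. by rewrite -[RHS](sum_delta_l f x0); apply: eq_bigr => z _; rewrite mulrC. Qed.

Lemma qform_add_delta A v c x0 :
  qform A (fun z => v z + c * (z == x0)%:R) =
  qform A v + conjc c * (\sum_y A x0 y * v y) + c * (\sum_x conjc (v x) * A x x0)
  + conjc c * c * A x0 x0.
Proof.
rewrite /qform.
have expand x y : conjc (v x + c * (x == x0)%:R) * A x y * (v y + c * (y == x0)%:R) =
  conjc (v x) * A x y * v y + (conjc (v x) * A x y * c) * (y == x0)%:R
  + (x == x0)%:R * (conjc c * (A x y * v y))
  + (x == x0)%:R * ((conjc c * c * A x y) * (y == x0)%:R).
  by rewrite rmorphD rmorphM /= conjc_nat; ring.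
under eq_bigr do under eq_bigr do rewrite expand.
have row x : \sum_y (x == x0)%:R * (conjc c * (A x y * v y)) =
    (x == x0)%:R * (conjc c * \sum_y A x y * v y) by rewrite !mulr_sumr.
have diag x : \sum_y (x == x0)%:R * ((conjc c * c * A x y) * (y == x0)%:R) =
    (x == x0)%:R * (conjc c * c * A x x0).
  by rewrite -(sum_delta_r (fun y => conjc c * c * A x y) x0) mulr_sumr.
under eq_bigr => x _ do
  rewrite !big_split /= (sum_delta_r (fun i => conjc (v x) * A x i * c)) row diag.
rewrite !big_split /= (sum_delta_l (fun x => conjc c * \sum_y A x y * v y))
  (sum_delta_l (fun x => conjc c * c * A x x0)).
have -> : \sum_x conjc (v x) * A x x0 * c = c * \sum_x conjc (v x) * A x x0.
  by rewrite mulr_sumr; apply: eq_bigr => x _; ring.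
ring.
Qed.

Lemma qform_pair A x y c :
  qform A (fun z => (z == x)%:R + c * (z == y)%:R) =
  A x x + conjc c * A y x + c * A x y + conjc c * c * A y y.
Proof.
rewrite (qform_add_delta A (fun z => (z == x)%:R)).
congr (_ + _ + _ + _).
- rewrite /qform.
  under eq_bigr => x1 _ do
    rewrite (sum_delta_r (fun y0 => conjc ((x1 == x)%:R) * A x1 y0) x) conjc_nat.
  exact: (sum_delta_l (fun x1 => A x1 x) x).
- by rewrite (sum_delta_r (fun y0 => A y y0) x).
- congr (_ * _).
  rewrite (eq_bigr (fun z => (z == x)%:R * A z y)); last by move=> z _; rewrite conjc_nat.
  exact: (sum_delta_l (fun z => A z y) x).
Qed.

Lemma psd_diag_ge0 A x : psd_ker A -> 0 <= A x x.
Proof.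
move=> hA; have := hA (fun z => (z == x)%:R + 0 * (z == x)%:R).
by rewrite qform_pair rmorph0 !mul0r !addr0.
Qed.

(* Over C, positivity of the form forces A to be Hermitian: test it on
   e_x + e_y and e_x + i e_y. *)
Lemma psd_herm A : psd_ker A -> forall x y, A y x = conjc (A x y).
Proof.
move=> hA x y.
have h1 := hA (fun z => (z == x)%:R + 1 * (z == y)%:R).
have h2 := hA (fun z => (z == x)%:R + 'i%C * (z == y)%:R).
rewrite qform_pair in h1; rewrite qform_pair in h2.
have ha := psd_diag_ge0 x hA; have hb := psd_diag_ge0 y hA.
move: h1 h2 ha hb.
case: (A x x) => a1 a2; case: (A y y) => b1 b2; case: (A x y) => p1 p2;
  case: (A y x) => r1 r2.
rewrite !lecE /= => /andP[/eqP e1 _] /andP[/eqP e2 _] /andP[/eqP e3 _] /andP[/eqP e4 _].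
by congr (_ +i* _); lra.
Qed.

(* A positive kernel with zero diagonal vanishes: test it on
   e_x - conj(A x y) e_y. *)
Lemma psd_zero_diag A : psd_ker A -> (forall x, A x x = 0) -> forall x y, A x y = 0.
Proof.
move=> hA h0 x y.
have := hA (fun z => (z == x)%:R + (- conjc (A x y)) * (z == y)%:R).
rewrite qform_pair !h0 rmorphN /= conjcK (psd_herm hA x y).
have -> : 0 + - A x y * conjc (A x y) + - conjc (A x y) * A x y
          + - A x y * - conjc (A x y) * 0
        = - (2%:R * (A x y * conjc (A x y))) by ring.
rewrite oppr_ge0 pmulr_rle0 ?ltr0n // => h.
have : A x y * conjc (A x y) = 0 by apply/eqP; rewrite eq_le h mulcJ_ge0.
by move/eqP; rewrite mulf_eq0 conjc_eq0 orbb => /eqP.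
Qed.

Section Schur.
Variable A : T -> T -> C.
Hypothesis hA : psd_ker A.
Variable x0 : T.
Let a := A x0 x0.
Hypothesis a_neq0 : a != 0.

Definition schur x y := A x y - A x x0 * A x0 y / a.

Lemma schur_psd : psd_ker schur.
Proof.
move=> w.
pose beta := \sum_y A x0 y * w y.
pose gamma := \sum_x conjc (w x) * A x x0.
have ca : conjc a = a by rewrite /a -psd_herm.
have cb : conjc beta = gamma.
  rewrite /beta rmorph_sum; apply: eq_bigr => y _.
  by rewrite rmorphM /= -psd_herm // mulrC.
have := hA (fun z => w z + (- beta / a) * (z == x0)%:R).
rewrite qform_add_delta -/beta -/gamma.
have -> : qform schur w = qform A w - gamma * beta / a.
  rewrite /qform /schur.
  have expand x y : conjc (w x) * (A x y - A x x0 * A x0 y / a) * w y =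
     conjc (w x) * A x y * w y - (conjc (w x) * A x x0) * (A x0 y * w y / a).
    by ring.
  under eq_bigr do under eq_bigr do rewrite expand.
  under eq_bigr do rewrite sumrB.
  rewrite sumrB; congr (_ - _).
  under eq_bigr do rewrite -mulr_sumr.
  by rewrite -mulr_suml -/gamma -mulr_suml -/beta mulrA.
rewrite rmorphM rmorphN /= conjc_inv ca cb -/a.
have -> : qform A w + - gamma / a * beta + - beta / a * gamma
          + - gamma / a * (- beta / a) * a
        = qform A w - gamma * beta / a by field.
by [].
Qed.

Lemma schur_pivot : schur x0 x0 = 0.
Proof. by rewrite /schur -/a; field. Qed.

Lemma schur_diag x : A x x = 0 -> schur x x = 0.
Proof.
move=> hx.
have hB := psd_diag_ge0 x schur_psd.
have a0 : 0 < a by rewrite lt_def a_neq0 psd_diag_ge0.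
move: hB; rewrite /schur hx sub0r (psd_herm hA x0 x) => hB.
apply/eqP; rewrite eq_le hB andbT oppr_le0.
by apply: divr_ge0; [rewrite mulrC; apply: mulcJ_ge0 | apply: ltW].
Qed.

(* Peeling off the pivot: A = |v><v| + schur with v = A e_x0 / sqrt a. *)
Lemma schur_rank1 : exists v : T -> C,
  forall x y, A x y = v x * conjc (v y) + schur x y.
Proof.
have a0 : 0 < a by rewrite lt_def a_neq0 psd_diag_ge0.
have aIm : complex.Im a = 0 by apply: ger0_Im; apply: ltW.
have aRe : 0 < complex.Re a by move: a0; rewrite ltcE /= => /andP[].
set r := Num.sqrt (complex.Re a).
have r0 : 0 < r by rewrite sqrtr_gt0.
have rr : r%:C * r%:C = a.
  rewrite -rmorphM /= -expr2 sqr_sqrtr; last exact: ltW.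
  by move: aIm; case: (a) => ar ai /= ->.
have rC : r%:C != 0 by rewrite eq_complex /= negb_and (gt_eqF r0).
exists (fun z => A z x0 / r%:C) => x y.
have -> : conjc (A y x0 / r%:C) = A x0 y / r%:C.
  have conj_inv : conjc ((r%:C)^-1) = (r%:C)^-1 by rewrite -fmorphV conjc_real.
  have conjM (u u' : C) : conjc (u * u') = conjc u * conjc u' by exact: rmorphM.
  by rewrite conjM conj_inv (psd_herm hA x0 y) conjcK.
by rewrite /schur -rr; field.
Qed.

End Schur.

(* Every positive kernel is a finite sum of rank-one kernels |psi><psi|,
   by induction on the number of nonzero diagonal entries. *)
Lemma psd_decomposition_bound (n : nat) A : psd_ker A ->
  (#|[pred x | A x x != 0%R]| <= n)%N ->
  exists m (psi : 'I_m -> T -> C),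
    forall x y, A x y = \sum_(k < m) psi k x * conjc (psi k y).
Proof.
have no_diag A' : psd_ker A' -> #|[pred x | A' x x != 0%R]| = 0%N ->
    exists m (psi : 'I_m -> T -> C),
      forall x y, A' x y = \sum_(k < m) psi k x * conjc (psi k y).
  move=> hA' e; exists 0%N, (fun _ _ => 0) => x y; rewrite big_ord0.
  apply: psd_zero_diag hA' _ x y => z; apply/eqP.
  by move: e => /card0_eq/(_ z); rewrite inE => /negbFE.
elim: n A => [|n IH] A hA hn;
  have [e|pos] := posnP #|[pred x | A x x != 0%R]|; try exact: no_diag.
  by move: hn; rewrite leqNgt pos.
have [x0 hx0] := card_gt0P pos; rewrite inE in hx0.
have fewer : (#|[pred x | schur A x0 x x != 0%R]| <= n)%N.
  apply: leq_trans (_ : #|[predD1 [pred x | A x x != 0%R] & x0]| <= n)%N.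
    apply: subset_leq_card; apply/fintype.subsetP => x; rewrite !inE => hx.
    apply/andP; split.
      by apply: contraNneq hx => ->; rewrite schur_pivot.
    by apply: contra hx => /eqP h; rewrite (schur_diag hA hx0 h).
  by move: hn; rewrite (cardD1 x0) inE hx0.
have [m [psi hpsi]] := IH _ (schur_psd hA hx0) fewer.
have [v hv] := schur_rank1 hA hx0.
exists m.+1, (fun k => if unlift ord0 k is Some j then psi j else v).
move=> x y; rewrite big_ord_recl unlift_none.
under eq_bigr => k _ do rewrite liftK.
by rewrite hv hpsi.
Qed.

Lemma psd_decomposition A : psd_ker A ->
  exists m (psi : 'I_m -> T -> C),
    forall x y, A x y = \sum_(k < m) psi k x * conjc (psi k y).
Proof. by move=> hA; apply: psd_decomposition_bound hA (max_card _). Qed.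

End PsdDecomposition.

Section MixedConcurrence.
Variable R : realType.
Variables I1 I2 I3 I4 : finType.
Local Notation T := (idx I1 I2 I3 I4).

Lemma conc_vec_ge0 (psi : T -> R[i]) : 0 <= conc_vec psi.
Proof. by rewrite /conc_vec mulr_ge0 ?invr_ge0 ?ler0n ?sqrtr_ge0. Qed.

Definition decomp_values (sigma : T -> T -> R[i]) : set R :=
  [set c : R | exists (n : nat) (psi : 'I_n -> T -> R[i]),
     is_decomp sigma psi /\ c = \sum_(k < n) conc_vec (psi k)]%classic.

Lemma decomp_values_lbound sigma : has_lbound (decomp_values sigma).
Proof.
exists 0 => c [n [psi [_ ->]]].
by apply: sumr_ge0 => k _; apply: conc_vec_ge0.
Qed.

Lemma conc_mixed_le sigma n (psi : 'I_n -> T -> R[i]) : is_decomp sigma psi ->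
  conc_mixed sigma <= \sum_(k < n) conc_vec (psi k).
Proof.
by move=> h; apply: (ge_inf (decomp_values_lbound sigma)); exists n, psi.
Qed.

Lemma conc_mixed_ge0 sigma n (psi : 'I_n -> T -> R[i]) : is_decomp sigma psi ->
  0 <= conc_mixed sigma.
Proof.
move=> h; apply: lb_le_inf; first by exists (\sum_(k < n) conc_vec (psi k)), n, psi.
move=> c [m [phi [_ ->]]].
by apply: sumr_ge0 => k _; apply: conc_vec_ge0.
Qed.

Lemma conc_mixed_approx sigma n (psi : 'I_n -> T -> R[i]) : is_decomp sigma psi ->
  forall e, 0 < e -> exists m (phi : 'I_m -> T -> R[i]),
    is_decomp sigma phi /\ \sum_(k < m) conc_vec (phi k) < conc_mixed sigma + e.
Proof.
move=> h e e0.
have ne : (decomp_values sigma !=set0)%classic.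
  by exists (\sum_(k < n) conc_vec (psi k)), n, psi.
have below : inf (decomp_values sigma) < conc_mixed sigma + e by rewrite ltrDl.
have [c [m [phi [hp ->]]] hlt] := inf_lt ne below.
by exists m, phi.
Qed.

End MixedConcurrence.

Section SubstateBound.
Variable R : realType.
Variables (s d1 d2 d3 d4 : nat).
Hypotheses (s_ge2 : (2 <= s)%N) (h1 : (s <= d1)%N) (h12 : (d1 <= d2)%N)
  (h23 : (d2 <= d3)%N) (h34 : (d3 <= d4)%N).
Variable rho : idx 'I_d1 'I_d2 'I_d3 'I_d4 -> idx 'I_d1 'I_d2 'I_d3 'I_d4 -> R[i].
Hypothesis rho_psd : psd rho.

Let D := (cA s d1 * cA s d2 * cB s d3 * cB s d4)%N.

Lemma D_gt0 : (0 < D)%N.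
Proof. by rewrite /D /cA /cB !muln_gt0 !bin_gt0; lia. Qed.

Definition box_conc (p : boxes d1 d2 d3 d4) : R :=
  conc_mixed (substate rho p.1.1.1 p.1.1.2 p.1.2 p.2).

Lemma decomp_substate n (psi : 'I_n -> _ -> R[i]) : is_decomp rho psi ->
  forall p : boxes d1 d2 d3 d4,
    is_decomp (substate rho p.1.1.1 p.1.1.2 p.1.2 p.2)
              (fun k => restrict_box p (psi k)).
Proof. by move=> h p u v; exact: h. Qed.

Lemma box_conc_l2norm_le :
  l2norm (sized s) box_conc <= Num.sqrt (D%:R : R) * conc_mixed rho.
Proof.
have [m0 [psi0 dec0]] := psd_decomposition rho_psd.
have sD0 : 0 < Num.sqrt (D%:R : R) by rewrite sqrtr_gt0 ltr0n D_gt0.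
apply/ler_addgt0Pr => e e0.
have [n [psi [dec near_opt]]] :=
  conc_mixed_approx dec0 (divr_gt0 e0 sD0 : 0 < e / Num.sqrt (D%:R : R)).
apply: le_trans (_ : Num.sqrt (D%:R : R) * \sum_(k < n) conc_vec (psi k) <= _).
  apply: (l2norm_dominated (c := fun k p => conc_vec (restrict_box p (psi k)))).
  - by rewrite ler0n.
  - move=> p _; rewrite /box_conc (conc_mixed_ge0 (decomp_substate dec (p := p))) /=.
    exact: (conc_mixed_le (decomp_substate dec (p := p))).
  - by move=> k p; apply: conc_vec_ge0.
  - by move=> k; apply: sum_conc_restrict.
  - by move=> k; apply: conc_vec_ge0.
have -> : Num.sqrt (D%:R : R) * conc_mixed rho + e
        = Num.sqrt (D%:R : R) * (conc_mixed rho + e / Num.sqrt (D%:R : R)).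
  by field; rewrite gt_eqF.
by rewrite ler_pM2l // ltW.
Qed.

End SubstateBound.

Theorem theorem4 (R : realType) (d1 d2 d3 d4 : nat)
  (hd1 : (2 <= d1)%N) (hd12 : (d1 <= d2)%N) (hd23 : (d2 <= d3)%N)
  (hd34 : (d3 <= d4)%N)
  (rho : idx 'I_d1 'I_d2 'I_d3 'I_d4 -> idx 'I_d1 'I_d2 'I_d3 'I_d4 -> R[i])
  (hrho : density rho)
  (s : nat) (hs2 : (2 <= s)%N) (hsd : (s <= d1)%N) :
  (('C(d1 - 2, s - 2) * 'C(d2 - 2, s - 2) * 'C(d3 - 1, s - 1)
      * 'C(d4 - 1, s - 1))%N%:R)^-1
    * (\sum_(S1 : {set 'I_d1} | #|S1| == s)
       \sum_(S2 : {set 'I_d2} | #|S2| == s)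
       \sum_(S3 : {set 'I_d3} | #|S3| == s)
       \sum_(S4 : {set 'I_d4} | #|S4| == s)
         conc_mixed (substate rho S1 S2 S3 S4) ^+ 2)
  <= conc_mixed rho ^+ 2.
Proof.
have [rho_psd _] := hrho.
have D0 : 0 < (cA s d1 * cA s d2 * cB s d3 * cB s d4)%N%:R :> R.
  by rewrite ltr0n D_gt0.
rewrite ler_pdivrMl // (sum_boxes s (fun S1 S2 S3 S4 =>
  conc_mixed (substate rho S1 S2 S3 S4) ^+ 2)).
have l2 := box_conc_l2norm_le hs2 hsd hd12 hd23 hd34 rho_psd.
have sq_ge0 : 0 <= \sum_(p | sized s p) box_conc rho p ^+ 2.
  by apply: sumr_ge0 => p _; apply: sqr_ge0.
rewrite -(sqr_sqrtr sq_ge0) -/(l2norm (sized s) (box_conc rho)).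
have := ler_pM (l2norm_ge0 _ _) (l2norm_ge0 _ _) l2 l2.
by rewrite -!expr2 exprMn sqr_sqrtr // (sqr_sqrtr (ltW D0)).
Qed.
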